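(* Let $n\ge0$, and let $e=(x,y)$ be an arc of $A(n)$. For each arc $(x,x')$ of $A(n)$ different from $e$, there exists exactly one arc $(y,y')$ of $A(n)$ such that $(x',y')$ is an arc of $A(n)$.
   Context: A hyperbinary expansion of a nonnegative integer $n$ is a word $x_0\cdots x_k$ over $\{0,1,2\}$ with $x_0\ne0$ and $\sum_i x_i2^{k-i}=n$; the empty word is the unique expansion of $0$. $\mathcal H(n)$ is the set of such expansions. $A(n)$ is the directed graph on $\mathcal H(n)$ with the following labeled arcs, for arbitrary words $\mathbf x,\mathbf y$ whenever both endpoints lie in $\mathcal H(n)$: \begin{itemize} \item an arc labeled $\to$ from $\mathbf x02\mathbf y$ to $\mathbf x10\mathbf y$ and from $2\mathbf y$ to $10\mathbf y$; \item an arc labeled $\twoheadrightarrow$ from $\mathbf x12\mathbf y$ to $\mathbf x20\mathbf y$. \end{itemize} *)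

From Stdlib Require Import List Arith.
Import ListNotations.

Definition word := list nat.

(* Value sum_i x_i 2^(k-i) (most significant digit first). *)
Definition word_value (w : word) : nat :=
  fold_left (fun acc d => 2 * acc + d) w 0.

Definition hyperbinary (n : nat) (w : word) : Prop :=
  Forall (fun d => d <= 2) w /\
  (match w with [] => True | d :: _ => d <> 0 end) /\
  word_value w = n.

Definition arc_to (u v : word) : Prop :=
  (exists x y, u = x ++ [0; 2] ++ y /\ v = x ++ [1; 0] ++ y) \/
  (exists y, u = 2 :: y /\ v = [1; 0] ++ y).

Definition arc_tt (u v : word) : Prop :=
  exists x y, u = x ++ [1; 2] ++ y /\ v = x ++ [2; 0] ++ y.

Definition arcA (n : nat) (u v : word) : Prop :=
  hyperbinary n u /\ hyperbinary n v /\ (arc_to u v \/ arc_tt u v).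

From Stdlib Require Import List Arith Lia.
Import ListNotations.

(* Read a word least significant digit first.  Every arc of A(n) is then a
   carry: a digit 2 at some position p, followed by a digit at most 1, becomes
   0 and the next digit is incremented.  Two distinct arcs out of x carry at
   distinct positions p and q, and these cannot be adjacent (position p + 1
   holds a digit below 2, position q holds 2).  Hence each carry is still
   enabled after the other and the two commute, which gives the arc
   completing the square; comparing digits at position q shows it is the
   only one. *)

Definition incr_head (L : list nat) : list nat :=
  match L with [] => [1] | c :: B => S c :: B end.

Fixpoint carry (p : nat) (L : list nat) : list nat :=
  match p, L with
  | _, [] => []
  | 0, _ :: B => 0 :: incr_head B
  | S p', d :: B => d :: carry p' B
  end.

(* Positions past the end read as 0, so a leading 2 carries into a new digit
   (the arc from 2y to 10y). *)
Definition carry_enabled (p : nat) (L : list nat) : Prop :=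
  nth p L 0 = 2 /\ nth (S p) L 0 < 2.

Lemma carry_app (A B : list nat) (d : nat) :
  carry (length A) (A ++ d :: B) = A ++ 0 :: incr_head B.
Proof. induction A as [|a A IH]; simpl; [reflexivity | now rewrite IH]. Qed.

Lemma nth_carry (L : list nat) (p i : nat) : p < length L ->
  nth i (carry p L) 0 =
  if i =? p then 0 else if i =? S p then S (nth i L 0) else nth i L 0.
Proof.
  revert p i; induction L as [|d B IH]; intros p i Hp; simpl in Hp; [lia|].
  destruct p as [|p].
  - destruct i as [|[|i]], B as [|b B]; simpl; auto; now destruct i.
  - destruct i as [|i]; simpl; auto. apply IH. lia.
Qed.

Lemma carry_comm (L : list nat) (p q : nat) : S p < q -> q < length L ->
  carry p (carry q L) = carry q (carry p L).
Proof.
  revert p q; induction L as [|d B IH]; intros p q Hpq Hq; simpl in Hq; [lia|].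
  destruct p as [|p], q as [|q]; try lia.
  - destruct q as [|q], B as [|b B]; simpl in *; try lia. reflexivity.
  - simpl. f_equal. apply IH; lia.
Qed.

Lemma carry_enabled_lt_length (p : nat) (L : list nat) :
  carry_enabled p L -> p < length L.
Proof.
  intros [Hp _]. destruct (Nat.lt_ge_cases p (length L)) as [|Hge]; auto.
  rewrite nth_overflow in Hp by exact Hge. discriminate.
Qed.

Lemma carry_enabled_apart (p q : nat) (L : list nat) :
  carry_enabled p L -> carry_enabled q L -> p <> q -> S p < q \/ S q < p.
Proof.
  intros [Hp Hp1] [Hq Hq1] Hpq.
  destruct (Nat.eq_dec q (S p)) as [->|]; [lia|].
  destruct (Nat.eq_dec p (S q)) as [->|]; [lia|].
  lia.
Qed.

Lemma carry_enabled_carry (p q : nat) (L : list nat) :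
  carry_enabled p L -> carry_enabled q L -> S p < q \/ S q < p ->
  carry_enabled q (carry p L).
Proof.
  intros Cp [Hq Hq1] Hpq. pose proof (carry_enabled_lt_length _ _ Cp) as Lp.
  unfold carry_enabled. rewrite !nth_carry by exact Lp.
  repeat match goal with |- context [?a =? ?b] => destruct (Nat.eqb_spec a b) end;
    try lia; auto.
Qed.

(* The digit at q separates the two sides: it is 2 in [carry p L], hence 0, 3
   or 2 after a carry at s, while it is 0 in [carry q L], hence at most 1
   after an enabled carry at t. *)
Lemma carry_square_unique (p q s t : nat) (L : list nat) :
  carry_enabled p L -> carry_enabled q L -> p <> q ->
  carry_enabled s (carry p L) -> carry_enabled t (carry q L) ->
  carry s (carry p L) = carry t (carry q L) -> s = q.
Proof.
  intros Cp Cq Hpq Cs Ct E.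
  pose proof (carry_enabled_apart _ _ _ Cp Cq Hpq) as Hapart.
  pose proof (carry_enabled_lt_length _ _ Cp) as Lp.
  pose proof (carry_enabled_lt_length _ _ Cq) as Lq.
  pose proof (carry_enabled_lt_length _ _ Cs) as Ls.
  pose proof (carry_enabled_lt_length _ _ Ct) as Lt.
  apply (f_equal (fun M => nth q M 0)) in E.
  destruct Cq as [Hq _], Ct as [Ht _].
  rewrite nth_carry in Ht by assumption.
  rewrite !nth_carry, Nat.eqb_refl in E by assumption.
  repeat match goal with H : context [?a =? ?b] |- _ => destruct (Nat.eqb_spec a b) end;
    subst; lia.
Qed.

Lemma carry_enabled_split (p : nat) (L : list nat) : carry_enabled p L ->
  exists A C, L = A ++ 2 :: C /\ p = length A /\ nth 0 C 0 < 2.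
Proof.
  intros Cp. pose proof (carry_enabled_lt_length _ _ Cp) as Lp.
  destruct Cp as [Hp Hp1].
  destruct (nth_split L 0 Lp) as (A & C & HL & <-).
  rewrite Hp in HL. exists A, C. repeat split; auto.
  rewrite HL, app_nth2 in Hp1 by lia. now rewrite Nat.sub_succ_l, Nat.sub_diag in Hp1.
Qed.

Lemma rev_app_cons2 (a b : list nat) (c d : nat) :
  rev (a ++ c :: d :: b) = rev b ++ d :: c :: rev a.
Proof. rewrite rev_app_distr. simpl. now rewrite <- !app_assoc. Qed.

Lemma arcA_carry (n : nat) (u v : word) : arcA n u v ->
  exists p, carry_enabled p (rev u) /\ rev v = carry p (rev u).
Proof.
  intros (_ & _ & [[(a & b & -> & ->) | (b & -> & ->)] | (a & b & -> & ->)]);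
    simpl; rewrite ?rev_app_cons2, <- ?app_assoc; simpl;
    exists (length (rev b)); rewrite carry_app;
    (split; [split; [apply nth_middle | rewrite app_nth2 by lia] | reflexivity]);
    rewrite Nat.sub_succ_l, Nat.sub_diag by lia; simpl; lia.
Qed.

Lemma word_value_app (u v : word) :
  word_value (u ++ v) = fold_left (fun acc d => 2 * acc + d) v (word_value u).
Proof. apply fold_left_app. Qed.

Lemma arcA_leading_two (n : nat) (b : word) :
  hyperbinary n (2 :: b) -> arcA n (2 :: b) (1 :: 0 :: b).
Proof.
  intros Hu. split; [exact Hu | split; [| left; right; now exists b]].
  destruct Hu as (HF & _ & Hv). inversion HF; subst.
  repeat split; auto; lia.
Qed.

Lemma arcA_inner_carry (n : nat) (a b : word) (c : nat) : c < 2 ->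
  hyperbinary n (a ++ c :: 2 :: b) -> arcA n (a ++ c :: 2 :: b) (a ++ S c :: 0 :: b).
Proof.
  intros Hc Hu. split; [exact Hu | split].
  - destruct Hu as (HF & Hh & Hv). split; [| split].
    + apply Forall_app in HF as [Ha HF]. inversion HF as [|? ? _ HF']; subst.
      inversion HF' as [|? ? _ Hb]; subst.
      apply Forall_app. split; [exact Ha |].
      constructor; [lia | constructor; [lia | exact Hb]].
    + destruct a; simpl in *; [lia | exact Hh].
    + rewrite word_value_app in *. rewrite <- Hv. simpl. f_equal. lia.
  - destruct c as [|[|c]]; [left; left | right | lia]; now exists a, b.
Qed.

Lemma carry_arcA (n : nat) (u : word) (p : nat) :
  hyperbinary n u -> carry_enabled p (rev u) -> arcA n u (rev (carry p (rev u))).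
Proof.
  intros Hu Cp.
  destruct (carry_enabled_split _ _ Cp) as (A & C & HL & -> & HC).
  rewrite HL, carry_app. apply (f_equal (@rev nat)) in HL.
  rewrite rev_involutive in HL. subst u. clear Cp.
  destruct C as [|c C]; simpl in *.
  - rewrite !rev_app_distr in *. now apply arcA_leading_two.
  - rewrite !rev_app_cons2 in *. now apply arcA_inner_carry.
Qed.

Theorem mainTheorem9 (n : nat) (x y x' : word) :
  arcA n x y -> arcA n x x' -> x' <> y ->
  exists! y', arcA n y y' /\ arcA n x' y'.
Proof.
  intros Hy Hx' Hne.
  destruct (arcA_carry _ _ _ Hy) as (p & Cp & Ey).
  destruct (arcA_carry _ _ _ Hx') as (q & Cq & Ex').
  assert (Hpq : p <> q) by (intros ->; apply Hne, rev_inj; congruence).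
  pose proof (carry_enabled_apart _ _ _ Cp Cq Hpq) as Hapart.
  destruct Hy as (_ & Hyh & _), Hx' as (_ & Hx'h & _).
  exists (rev (carry q (carry p (rev x)))). split; [split|].
  - rewrite <- Ey. apply carry_arcA; [exact Hyh |].
    rewrite Ey. now apply carry_enabled_carry.
  - assert (Comm : carry p (carry q (rev x)) = carry q (carry p (rev x))).
    { destruct Hapart; [| symmetry]; apply carry_comm; auto using carry_enabled_lt_length. }
    rewrite <- Comm, <- Ex'. apply carry_arcA; [exact Hx'h |].
    rewrite Ex'. apply carry_enabled_carry; auto. lia.
  - intros y' [Hy' Hx'y'].
    destruct (arcA_carry _ _ _ Hy') as (s & Cs & Es).
    destruct (arcA_carry _ _ _ Hx'y') as (t & Ct & Et).
    rewrite Ey in Cs, Es. rewrite Ex' in Ct, Et.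
    assert (s = q) as -> by (apply (carry_square_unique p q s t (rev x)); congruence).
    apply rev_inj. now rewrite rev_involutive.
Qed.
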